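(* Let $c\in[0,1]$. There exists a countable collection of languages $\mathcal{L}$ such that no set-based generator can generate in the limit from $\mathcal{L}$ and achieve set-based upper density at least $1-c+\varepsilon$, for any $\varepsilon>0$, under adversaries that use an enumeration without noise and with $c$-omissions.
   Context: The universe is $U=\mathbb{N}$ with its natural order. A language is an infinite subset of $U$; a collection is a countable family of languages. For $A,B\subseteq\mathbb{N}$ with $B=\{b_1<b_2<\cdots\}$, $\mu_{\rm up}(A,B)=\limsup_n\frac1n|A\cap\{b_1,\dots,b_n\}|$ and $\mu_{\rm low}(A,B)=\liminf_n\frac1n|A\cap\{b_1,\dots,b_n\}|$. An enumeration of a set $L$ (without noise or omissions) is a sequence in which every element of $L$ appears exactly once and no other elements appear; $S_n=\{x_1,\dots,x_n\}$. An enumeration of $K$ without noise and with $c$-omissions is an enumeration of some $\hat K\subseteq K$ with $\mu_{\rm low}(\hat K,K)\ge1-c$. A set-based generator is a sequence of maps that, given $x_1,\dots,x_n$ (and knowledge of $\mathcal{L}$, not of $K$), outputs $A_n\subseteq U\setminus S_n$. It generates in the limit if for every $K\in\mathcal{L}$ and admissible enumeration of $K$ there is $n^\star$ with $A_n\subseteq K$ for $n\ge n^\star$; it achieves set-based upper density $\rho$ if $\limsup_n\mu_{\rm low}(A_n,K)\ge\rho$ for every such $K$ and enumeration. *)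

From HB Require Import structures.
From mathcomp Require Import all_boot all_order all_algebra.
From mathcomp Require Import all_classical all_reals.
From mathcomp Require Import topology normedtype sequences.
Set Implicit Arguments. Unset Strict Implicit. Unset Printing Implicit Defensive.
Import Order.TTheory GRing.Theory Num.Theory.
Local Open Scope classical_set_scope.
Local Open Scope ring_scope.

(* Universe U = nat. Sets are classical sets [set nat]. *)

Definition count_below (B : set nat) (x : nat) : nat :=
  (\sum_(0 <= y < x) ((y \in B) : nat))%N.

(* the i-th (0-based) element of B in increasing order, i.e. b_{i+1}
   when B = {b_1 < b_2 < ...} is infinite *)
Definition bnth (B : set nat) (i : nat) : nat :=
  xget 0%N [set x | B x /\ count_below B x = i].

Definition count_prefix (A B : set nat) (n : nat) : nat :=
  (\sum_(0 <= i < n) ((bnth B i \in A) : nat))%N.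

(* mu_low(A,B) = liminf_n (1/n) |A ∩ {b_1,...,b_n}|   (n >= 1) *)
Definition mu_low {R : realType} (A B : set nat) : \bar R :=
  limn_einf (fun n : nat => ((count_prefix A B n.+1)%:R / (n.+1)%:R : R)%:E).

(* S_n = {x_1, ..., x_n}  (x is 0-indexed: x 0 = x_1) *)
Definition prefix (x : nat -> nat) (n : nat) : seq nat := [seq x i | i <- iota 0 n].

Definition enumeration_of (x : nat -> nat) (L : set nat) : Prop :=
  injective x /\ range x = L.

Definition enum_c_omissions {R : realType} (c : R) (x : nat -> nat) (K : set nat) : Prop :=
  exists Khat : set nat, Khat `<=` K /\ enumeration_of x Khat /\
    (((1 - c)%:E <= mu_low (R:=R) Khat K)%E).

Definition set_generator (G : seq nat -> set nat) : Prop :=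
  forall s : seq nat, forall y, G s y -> y \notin s.

Definition collection (L : nat -> set nat) : Prop :=
  forall i, infinite_set (L i).

Definition generates_in_limit {R : realType} (c : R) (L : nat -> set nat)
    (G : seq nat -> set nat) : Prop :=
  forall i (x : nat -> nat), enum_c_omissions c x (L i) ->
    exists nstar, forall n, (nstar <= n)%N -> G (prefix x n) `<=` L i.

Definition achieves_upper_density {R : realType} (c : R) (L : nat -> set nat)
    (G : seq nat -> set nat) (rho : R) : Prop :=
  forall i (x : nat -> nat), enum_c_omissions c x (L i) ->
    ((rho%:E <= limn_esup (fun n => mu_low (R:=R) (G (prefix x n)) (L i)))%E).

From mathcomp Require Import all_boot all_order all_algebra.
From mathcomp Require Import all_classical all_reals.
From mathcomp Require Import topology normedtype sequences.
From mathcomp Require Import ereal zify.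
Import Order.TTheory GRing.Theory Num.Theory.
Local Open Scope classical_set_scope.
Local Open Scope ring_scope.

(* Take L_0 = N and, for q >= 1, L_q = {n | n mod q < p_q} with
   1 - c <= p_q / q <= 1 - c + 1/q.  The increasing enumeration of L_q is an
   admissible enumeration both of L_q (without omissions) and of N (it omits a
   set of density at most c).  A generator that generates in the limit must
   eventually output subsets of L_q on this enumeration, since the target may
   be L_q; but subsets of L_q have lower density at most p_q / q in N, which
   is below 1 - c + eps as soon as 1/q < eps, while the target may as well be
   N. *)

Definition count_lt (A : set nat) (n : nat) : nat :=
  (\sum_(0 <= i < n) ((i \in A) : nat))%N.

Lemma count_ltS A n : count_lt A n.+1 = (count_lt A n + ((n \in A) : nat))%N.
Proof. by rewrite /count_lt big_nat_recr. Qed.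

Lemma subset_count_lt A B n : A `<=` B -> (count_lt A n <= count_lt B n)%N.
Proof.
move=> AB; apply: leq_sum => i _.
by case: (boolP (i \in A)) => // /set_mem /AB /mem_set ->.
Qed.

Lemma bnth_setT i : bnth setT i = i.
Proof.
have count_belowT x : count_below setT x = x.
  rewrite /count_below (eq_bigr (fun=> 1%N)) => [|y _]; last by rewrite in_setT.
  by rewrite sum_nat_const_nat subn0 muln1.
rewrite /bnth; apply: xget_unique; first by split; last rewrite count_belowT.
by move=> y [_]; rewrite count_belowT.
Qed.

Lemma count_prefix_setT A n : count_prefix A setT n = count_lt A n.
Proof. by apply: eq_bigr => i _; rewrite bnth_setT. Qed.

(* [bnth B i] defaults to 0 when B has at most i elements, hence [B 0]. *)
Lemma bnth_in B i : B 0%N -> B (bnth B i).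
Proof. by move=> B0; rewrite /bnth; case: xgetP => [x _ []|]. Qed.

Lemma count_prefix_id B n : B 0%N -> count_prefix B B n = n.
Proof.
move=> B0; rewrite /count_prefix (eq_bigr (fun=> 1%N)).
  by rewrite sum_nat_const_nat subn0 muln1.
by move=> i _; rewrite mem_set //; exact: bnth_in.
Qed.

Section liminf_limsup.
Context {R : realType}.
Implicit Types (u : (\bar R)^nat) (l : \bar R).
Local Open Scope ereal_scope.

Lemma limn_einf_ge u l : (forall n, l <= u n) -> l <= limn_einf u.
Proof.
move=> h; rewrite limn_einf_lim; apply: lime_ge; first exact: is_cvg_einfs.
by apply: nearW => n; apply: le_ereal_inf_tmp => _ [m _ <-].
Qed.

Lemma limn_einf_le_infinitely_often u l :
  (forall N, exists2 n, (N <= n)%N & u n <= l) -> limn_einf u <= l.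
Proof.
move=> h; rewrite limn_einf_lim; apply: lime_le; first exact: is_cvg_einfs.
apply: nearW => N; have [n Nn unl] := h N.
by apply: le_trans unl; apply: ereal_inf_lbound; exists n.
Qed.

Lemma limn_esup_le_eventually u l :
  (exists N, forall n, (N <= n)%N -> u n <= l) -> limn_esup u <= l.
Proof.
move=> [N h]; rewrite limn_esup_lim; apply: lime_le; first exact: is_cvg_esups.
near=> M; apply: ge_ereal_sup => _ [m /= Mm <-]; apply: h.
by apply: leq_trans Mm; near: M; exists N.
Unshelve. all: by end_near.
Qed.

End liminf_limsup.

Lemma mu_low_id {R : realType} B : B 0%N -> (1%:E <= mu_low (R:=R) B B)%E.
Proof.
move=> B0; apply: limn_einf_ge => n.
by rewrite count_prefix_id // divff // pnatr_eq0.
Qed.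

Lemma enum_c_omissions_id {R : realType} (c : R) x B :
  0 <= c -> B 0%N -> enumeration_of x B -> enum_c_omissions c x B.
Proof.
move=> c0 B0 xB; exists B; split=> //; split=> //.
by apply: le_trans (mu_low_id _ B0); rewrite lee_fin lerBlDr lerDl.
Qed.

Lemma ler_pdiv_nat {R : realFieldType} (a b m n : nat) : (0 < b)%N -> (0 < n)%N ->
  (a * n <= m * b)%N -> (a%:R / b%:R : R) <= m%:R / n%:R.
Proof.
move=> b0 n0 h; rewrite ler_pdivrMr ?ltr0n // mulrAC ler_pdivlMr ?ltr0n //.
by rewrite -!natrM ler_nat.
Qed.

Section low_residues.
Context {R : realType}.
Variables p q : nat.
Hypotheses (q_gt0 : (0 < q)%N) (p_le_q : (p <= q)%N).

Definition low_residues : set nat := [set n | (n %% q < p)%N].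

Lemma in_low_residues n : (n \in low_residues) = (n %% q < p)%N.
Proof. by apply/idP/idP => [/set_mem|/mem_set]. Qed.

Lemma count_lt_low_residues m r : (r <= q)%N ->
  count_lt low_residues (m * q + r) = (m * p + minn r p)%N.
Proof.
elim: m r => [|m IHm] r.
  rewrite !mul0n !add0n; elim: r => [|r IHr] rq.
    by rewrite /count_lt big_geq // min0n.
  rewrite count_ltS IHr ?(ltnW rq) // in_low_residues modn_small //.
  by case: (ltnP r p); lia.
elim: r => [|r IHr] rq; first by rewrite addn0 mulSn addnC IHm //; lia.
rewrite addnS count_ltS IHr ?(ltnW rq) // in_low_residues modnMDl modn_small //.
by case: (ltnP r p); lia.
Qed.

Lemma count_lt_low_residues_mul m : count_lt low_residues (m * q) = (m * p)%N.
Proof. by rewrite -[(m * q)%N]addn0 count_lt_low_residues //; lia. Qed.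

Lemma count_lt_low_residues_ge n : (p * n <= count_lt low_residues n * q)%N.
Proof.
have r_lt_q := ltn_pmod n q_gt0.
rewrite {1 2}(divn_eq n q) count_lt_low_residues; last exact: ltnW.
set r := (n %% q)%N in r_lt_q *; set m := (n %/ q)%N.
by case: (leqP r p); nia.
Qed.

Lemma infinite_low_residues : (0 < p)%N -> infinite_set low_residues.
Proof.
move=> p_gt0; apply/infiniteP/pcard_leP/injfunPex; exists (muln^~ q).
  by move=> m _; rewrite /low_residues /= modnMl.
by move=> m1 m2 _ _ /eqP; rewrite eqn_pmul2r // => /eqP.
Qed.

Definition low_residues_enum (m : nat) : nat := ((m %/ p) * q + m %% p)%N.

Lemma low_residues_enumP : (0 < p)%N -> enumeration_of low_residues_enum low_residues.
Proof.
move=> p_gt0; have mod_small m : (m %% p < q)%N.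
  by apply: leq_trans p_le_q; apply: ltn_pmod.
have enum_mod m : (low_residues_enum m %% q = m %% p)%N.
  by rewrite modnMDl modn_small.
have enum_div m : (low_residues_enum m %/ q = m %/ p)%N.
  by rewrite divnMDl // (divn_small (mod_small m)) addn0.
split.
  by move=> m1 m2 e; rewrite (divn_eq m1 p) (divn_eq m2 p) -!enum_div -!enum_mod e.
apply/seteqP; split=> [_ [m _ <-]|n].
  by rewrite /low_residues /= enum_mod ltn_pmod.
rewrite /low_residues /= => np; exists ((n %/ q) * p + n %% q)%N => //.
rewrite /low_residues_enum divnMDl // (divn_small np) addn0.
by rewrite modnMDl (modn_small np) -divn_eq.
Qed.

Lemma mu_low_low_residues :
  ((p%:R / q%:R : R)%:E <= mu_low (R:=R) low_residues setT)%E.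
Proof.
apply: limn_einf_ge => n; rewrite count_prefix_setT lee_fin.
exact/ler_pdiv_nat/count_lt_low_residues_ge.
Qed.

Lemma mu_low_sub_low_residues A : A `<=` low_residues ->
  (mu_low (R:=R) A setT <= (p%:R / q%:R : R)%:E)%E.
Proof.
move=> A_sub; apply: limn_einf_le_infinitely_often => N.
have qN : (0 < N.+1 * q)%N by rewrite muln_gt0.
exists (N.+1 * q).-1; first by have := leq_pmulr N.+1 q_gt0; lia.
rewrite prednK // count_prefix_setT lee_fin; apply: ler_pdiv_nat => //.
have := @subset_count_lt _ _ (N.+1 * q) A_sub; rewrite count_lt_low_residues_mul.
nia.
Qed.

End low_residues.

Section upper_approx.
Context {R : archiFieldType} (c : R).

Definition upper_approx_num (q : nat) : nat :=
  minn q (Num.truncn ((1 - c) * q%:R)).+1.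

Lemma upper_approx_num_gt0 {q} : (0 < q)%N -> (0 < upper_approx_num q)%N.
Proof. by move=> q_gt0; rewrite leq_min q_gt0. Qed.

Lemma upper_approx_num_le q : (upper_approx_num q <= q)%N.
Proof. exact: geq_minl. Qed.

Lemma upper_approx_num_ratio {q} : 0 <= c -> c <= 1 -> (0 < q)%N ->
  1 - c <= (upper_approx_num q)%:R / q%:R <= 1 - c + q%:R^-1.
Proof.
move=> c_ge0 c_le1 q_gt0; have q_pos : 0 < q%:R :> R by rewrite ltr0n.
have x_ge0 : 0 <= (1 - c) * q%:R by rewrite mulr_ge0 ?ler0n // subr_ge0.
have /andP[t_le_x x_lt_tS] := truncn_itv x_ge0.
set t := Num.truncn _ in t_le_x x_lt_tS.
rewrite /upper_approx_num -/t; apply/andP; split.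
- rewrite ler_pdivlMr //.
  case: (leqP q t.+1) => _; last exact: ltW.
  by rewrite ler_piMl // lerBlDr lerDl.
- rewrite ler_pdivrMr // mulrDl mulVf ?gt_eqF //.
  apply: (le_trans (_ : _ <= t.+1%:R)); first by rewrite ler_nat geq_minr.
  by rewrite -addn1 natrD lerD2r.
Qed.

End upper_approx.

Definition periodic_languages {R : archiFieldType} (c : R) (i : nat) : set nat :=
  if i is q.+1 then low_residues (upper_approx_num c q.+1) q.+1 else setT.

Lemma collection_periodic_languages {R : archiFieldType} (c : R) :
  collection (periodic_languages c).
Proof.
case=> [|q] /=; first exact: infinite_nat.
exact/infinite_low_residues/upper_approx_num_gt0.
Qed.

Theorem theorem6p4 (R : realType) (c : R) (hc0 : 0 <= c) (hc1 : c <= 1) :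
  exists L : nat -> set nat, collection L /\
    forall G : seq nat -> set nat, set_generator G ->
      forall eps : R, 0 < eps ->
        ~ (generates_in_limit c L G /\
           achieves_upper_density c L G (1 - c + eps)).
Proof.
exists (periodic_languages c); split; first exact: collection_periodic_languages.
move=> G _ eps eps_gt0 [gen dens].
set q := (Num.truncn eps^-1).+1.
have q_gt0 : (0 < q)%N := ltn0Sn _.
have q_inv_lt : q%:R^-1 < eps by rewrite invf_plt ?posrE ?ltr0n // truncnS_gt.
set p := upper_approx_num c q.
have p_gt0 : (0 < p)%N := upper_approx_num_gt0 c q_gt0.
have p_le_q : (p <= q)%N := upper_approx_num_le c q.
have /andP[ratio_ge ratio_le] := upper_approx_num_ratio c hc0 hc1 q_gt0.
pose x := low_residues_enum p q.
have x_enum : enumeration_of x (low_residues p q) by exact: low_residues_enumP.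
have x_omits_nat : enum_c_omissions c x (periodic_languages c 0).
  exists (low_residues p q); split=> //; split=> //.
  by apply: le_trans (mu_low_low_residues _ _ q_gt0 p_le_q); rewrite lee_fin.
have x_omits_self : enum_c_omissions c x (periodic_languages c q).
  by apply: enum_c_omissions_id; rewrite //= /low_residues /= mod0n.
have [n0 eventually_sub] := gen q x x_omits_self.
have := dens 0%N x x_omits_nat; apply/negP; rewrite -ltNge.
apply: (@le_lt_trans _ _ (p%:R / q%:R : R)%:E).
  apply: limn_esup_le_eventually; exists n0 => n /eventually_sub.
  exact: mu_low_sub_low_residues.
by rewrite lte_fin; apply: (le_lt_trans ratio_le); rewrite ltrD2l.
Qed.
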